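(* Let $\gamma_1,\dots,\gamma_B$ be i.i.d. with density $f(\gamma)=\frac{m^m\gamma^{m-1}}{\Gamma(m)}e^{-m\gamma}$, $\gamma\ge0$ ($m>0$), let $\beta>0$ and $0<R\le I_{\mathcal X}(\beta)$. With $I^\beta_{\mathcal X}(\rho)=I_{\mathcal X}(\beta)\mathbf 1\{\rho\ge\beta\}$, there is a constant $\mathcal K_\beta>0$ such that, as $P\to\infty$, \[ \Pr\Big(\frac1B\sum_{b=1}^B I^\beta_{\mathcal X}(P\gamma_b)<R\Big)\doteq \mathcal K_\beta P^{-m\,d_\beta(R)},\qquad d_\beta(R)=1+\Big\lfloor B\Big(1-\frac{R}{I_{\mathcal X}(\beta)}\Big)\Big\rfloor. \]
   Context: $I_{\mathcal X}(\rho)$ is the mutual information (bits) of the AWGN channel with SNR $\rho$ and uniform input on a discrete constellation $\mathcal X$; $I_{\mathcal X}(\beta)>0$. Exponential equality: $f(P)\doteq KP^{-d}$ means $\lim_{P\to\infty}f(P)P^d=K$. *)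

From Stdlib Require Import Reals Lra Rprod ClassicalEpsilon.
Open Scope R_scope.

(* L is the improper Riemann integral of g over (0, x]  (singularity allowed at 0). *)
Definition improper_int_0 (g : R -> R) (x L : R) : Prop :=
  forall eps, 0 < eps -> exists delta, 0 < delta /\
    forall a, 0 < a -> a < delta ->
      exists pr : Riemann_integrable g a x, Rabs (RiemannInt pr - L) < eps.

Definition improper_int_0_inf (g : R -> R) (L : R) : Prop :=
  forall eps, 0 < eps -> exists delta M, 0 < delta /\
    forall a b, 0 < a -> a < delta -> M < b ->
      exists pr : Riemann_integrable g a b, Rabs (RiemannInt pr - L) < eps.

Definition Gamma_fn (s : R) : R :=
  epsilon (inhabits 0)
    (fun L => improper_int_0_inf (fun t => Rpower t (s - 1) * exp (- t)) L).

Definition nak_density (m : R) (t : R) : R :=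
  if Rle_dec t 0 then 0
  else Rpower m m * Rpower t (m - 1) * exp (- (m * t)) / Gamma_fn m.

Definition nak_cdf (m x : R) : R :=
  if Rle_dec x 0 then 0
  else epsilon (inhabits 0) (fun L => improper_int_0 (nak_density m) x L).

(* CDF at extended bounds: lower bound None = -oo, upper bound None = +oo. *)
Definition cdf_lo (m : R) (o : option R) : R :=
  match o with None => 0 | Some x => nak_cdf m x end.
Definition cdf_hi (m : R) (o : option R) : R :=
  match o with None => 1 | Some x => nak_cdf m x end.

Definition in_range (lo hi : option R) (v : R) : Prop :=
  (match lo with None => True | Some x => x <= v end) /\
  (match hi with None => True | Some y => v < y end).

Definition I_thr (I : R -> R) (beta rho : R) : R :=
  if Rle_dec beta rho then I beta else 0.

(* Exponential equality  g(P) =. K P^(-d):  lim_{P->oo} g(P) P^d = K. *)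
Definition exp_equal (g : R -> R) (K d : R) : Prop :=
  forall eps, 0 < eps -> exists M, 0 < M /\
    forall P, M < P -> Rabs (g P * Rpower P d - K) < eps.

Definition d_beta (B : nat) (Rt Ib : R) : Z :=
  (1 + Int_part (INR B * (1 - Rt / Ib)))%Z.

(* Write F for the Nakagami-m CDF.  The proof has three ingredients.
   1. Small-argument behaviour of F:  (m^m / (m Gamma(m))) x^m e^{-mx} <= F(x)
      <= (m^m / (m Gamma(m))) x^m, obtained by integrating explicit bounds of
      the density; this needs Gamma(m) > 0, proved from the improper integral.
      Hence P^m F(beta/P) -> u := m^m beta^m / (m Gamma(m)) and F(beta/P) -> 0.
   2. Since I^beta(P gamma_b) is I(beta) or 0 according as gamma_b >= beta/P,
      the outage event is the disjoint union, over the patterns s in {0,1}^B of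
      blocks above/below beta/P, of those with I(beta) #above(s) / B < R; by
      independence a pattern with j faded blocks has probability
      (1 - F)^(B-j) F^j.
   3. Such a pattern is in outage iff j >= d := d_beta(R), so each term of
      P^{m d} Pr(outage) converges (to u^d if j = d, to 0 otherwise), and the
      limit K = #{s : j = d} u^d is positive. *)

From Stdlib Require Import Reals Lra Lia Rprod ClassicalEpsilon List ZArith FinFun.
From Coquelicot Require Import Coquelicot.
Import ListNotations.
Open Scope R_scope.

(** * Integrals of power-exponential kernels *)

(* The kernel  c t^p e^{-kt}.  Both the Gamma integrand (c = k = 1) and the
   Nakagami density (c = m^m / Gamma(m), k = m) are of this form on t > 0. *)
Definition pe (c p k t : R) : R := c * Rpower t p * exp (- (k * t)).

(* Rpower x y is defined as exp (y ln x), hence always positive. *)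
Lemma Rpower_pos x y : 0 < Rpower x y.
Proof. apply exp_pos. Qed.

Lemma exp_le x y : x <= y -> exp x <= exp y.
Proof. intros [h | ->]; [left; now apply exp_increasing | lra]. Qed.

Lemma pe_nonneg c p k t : 0 <= c -> 0 <= pe c p k t.
Proof.
  intro Hc. unfold pe. pose proof (Rpower_pos t p). pose proof (exp_pos (- (k * t))).
  apply Rmult_le_pos; [apply Rmult_le_pos|]; lra.
Qed.

Lemma pe_derivable c p k x : 0 < x ->
  derivable_pt_lim (pe c p k) x
    (c * (p * Rpower x (p - 1)) * exp (- (k * x)) + c * Rpower x p * (exp (- (k * x)) * (- k))).
Proof.
  intro Hx.
  apply (derivable_pt_lim_ext (mult_fct (fun t => c * Rpower t p) (fun t => exp (- (k * t)))));
    [reflexivity|].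
  apply (derivable_pt_lim_mult (fun t => c * Rpower t p) (fun t => exp (- (k * t))) x
           (c * (p * Rpower x (p - 1))) (exp (- (k * x)) * (- k))).
  - apply (derivable_pt_lim_ext (mult_real_fct c (fun t => Rpower t p))); [reflexivity|].
    apply derivable_pt_lim_scal. now apply derivable_pt_lim_power.
  - apply (derivable_pt_lim_comp (fun t => - (k * t)) exp).
    + replace (- k) with (- (k * 1)) by ring.
      apply (derivable_pt_lim_ext (opp_fct (mult_real_fct k id))); [reflexivity|].
      apply derivable_pt_lim_opp, derivable_pt_lim_scal, derivable_pt_lim_id.
    + apply derivable_pt_lim_exp.
Qed.

Lemma pe_continuous c p k x : 0 < x -> continuity_pt (pe c p k) x.
Proof.
  intro Hx. apply derivable_continuous_pt. eexists. now apply pe_derivable.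
Qed.

Lemma pe_integrable c p k a b : 0 < a -> a <= b -> Riemann_integrable (pe c p k) a b.
Proof.
  intros; apply continuity_implies_RiemannInt; [lra | intros; apply pe_continuous; lra].
Qed.

Lemma RiemannInt_antiderivative (f Phi : R -> R) a b (pr : Riemann_integrable f a b) :
  a <= b -> (forall x, a <= x <= b -> continuity_pt f x) ->
  (forall x, a <= x <= b -> derivable_pt_lim Phi x (f x)) ->
  RiemannInt pr = Phi b - Phi a.
Proof.
  intros Hab Hcont Hder.
  rewrite (RiemannInt_P20 Hab (FTC_P1 Hab Hcont) pr).
  assert (Hanti : antiderivative f Phi a b).
  { split; [|exact Hab]. intros x Hx. exists (exist _ (f x) (Hder x Hx)). reflexivity. }
  destruct (antiderivative_Ucte _ _ _ _ _ (RiemannInt_P29 Hab Hcont) Hanti) as [c Hc].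
  rewrite (Hc b), (Hc a); [ring | lra | lra].
Qed.

Lemma RiemannInt_power c p a b (pr : Riemann_integrable (pe c (p - 1) 0) a b) :
  0 < a -> a <= b -> 0 < p ->
  RiemannInt pr = c / p * Rpower b p - c / p * Rpower a p.
Proof.
  intros Ha Hab Hp.
  rewrite (RiemannInt_antiderivative _ (pe (c / p) p 0) a b pr Hab).
  - unfold pe. rewrite !Rmult_0_l, Ropp_0, exp_0. ring.
  - intros; apply pe_continuous; lra.
  - intros x Hx.
    replace (pe c (p - 1) 0 x) with (c / p * (p * Rpower x (p - 1)) * exp (- (0 * x))
      + c / p * Rpower x p * (exp (- (0 * x)) * (- 0))) by (unfold pe; field; lra).
    apply pe_derivable; lra.
Qed.

Lemma RiemannInt_exponential c k a b (pr : Riemann_integrable (pe c 0 k) a b) :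
  0 < a -> a <= b -> 0 < k ->
  RiemannInt pr = c / k * exp (- (k * a)) - c / k * exp (- (k * b)).
Proof.
  intros Ha Hab Hk.
  rewrite (RiemannInt_antiderivative _ (pe (- (c / k)) 0 k) a b pr Hab).
  - unfold pe. rewrite !Rpower_O by lra. ring.
  - intros; apply pe_continuous; lra.
  - intros x Hx.
    replace (pe c 0 k x) with (- (c / k) * (0 * Rpower x (0 - 1)) * exp (- (k * x))
      + - (c / k) * Rpower x 0 * (exp (- (k * x)) * (- k)))
      by (unfold pe; rewrite Rpower_O by lra; field; lra).
    apply pe_derivable; lra.
Qed.

Lemma RiemannInt_nonneg f a b (pr : Riemann_integrable f a b) :
  a <= b -> (forall t, a < t < b -> 0 <= f t) -> 0 <= RiemannInt pr.
Proof.
  intros Hab Hf.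
  pose proof (RiemannInt_P19 (Riemann_integrable_const 0 a b) pr Hab Hf) as H.
  rewrite RiemannInt_const in H. lra.
Qed.

Lemma sup_approx (S : R -> Prop) (U y0 : R) :
  (forall y, S y -> y <= U) -> S y0 ->
  exists L, (forall y, S y -> y <= L) /\
    forall eps, 0 < eps -> exists y, S y /\ L - eps < y.
Proof.
  intros HU Hy0.
  destruct (completeness S (ex_intro _ U HU) (ex_intro _ y0 Hy0)) as [L [HL1 HL2]].
  exists L. split; [exact HL1|]. intros eps Heps.
  apply NNPP. intro Hn. assert (L <= L - eps); [|lra].
  apply HL2. intros y Hy. destruct (Rle_dec y (L - eps)) as [h|h]; [exact h|].
  exfalso; apply Hn; exists y; split; [exact Hy | lra].
Qed.

(* If the integrals over [a, x] of a nonnegative f are bounded, f has an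
   improper integral over (0, x]: it is their supremum. *)
Lemma improper_int_0_exists f x U : 0 < x ->
  (forall a, 0 < a -> a <= x -> Riemann_integrable f a x) ->
  (forall t, 0 < t <= x -> 0 <= f t) ->
  (forall a (pr : Riemann_integrable f a x), 0 < a <= x -> RiemannInt pr <= U) ->
  exists L, improper_int_0 f x L.
Proof.
  intros Hx Hint Hpos Hbound.
  set (S := fun y => exists a, 0 < a <= x /\
              exists pr : Riemann_integrable f a x, y = RiemannInt pr).
  destruct (sup_approx S U (RiemannInt (Hint x Hx (Rle_refl x)))) as [L [HL Happrox]].
  { intros y [a [Ha [pr ->]]]. now apply Hbound. }
  { exists x. split; [lra|]. eexists; reflexivity. }
  exists L. intros eps Heps.
  destruct (Happrox eps Heps) as [y [[a0 [Ha0 [pr0 ->]]] Hy]].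
  exists a0. split; [lra|]. intros a Ha Ha0'.
  set (pr := Hint a Ha (Rlt_le _ _ (Rlt_le_trans _ _ _ Ha0' (proj2 Ha0)))).
  exists pr.
  assert (Hle : RiemannInt pr <= L) by (apply HL; exists a; split; [lra|]; exists pr; reflexivity).
  assert (pr1 : Riemann_integrable f a a0) by (apply (RiemannInt_P22 pr); lra).
  pose proof (RiemannInt_P26 pr1 pr0 pr) as Hchasles.
  pose proof (RiemannInt_nonneg _ _ _ pr1 (Rlt_le _ _ Ha0') ltac:(intros t Ht; apply Hpos; lra)).
  apply Rabs_def1; lra.
Qed.

Lemma improper_int_0_inf_exists f U :
  (forall a b, 0 < a -> a <= b -> Riemann_integrable f a b) ->
  (forall t, 0 < t -> 0 <= f t) ->
  (forall a b (pr : Riemann_integrable f a b), 0 < a <= 1 -> 1 <= b -> RiemannInt pr <= U) ->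
  exists L, improper_int_0_inf f L.
Proof.
  intros Hint Hpos Hbound.
  set (S := fun y => exists a b, 0 < a <= 1 /\ 1 <= b /\
              exists pr : Riemann_integrable f a b, y = RiemannInt pr).
  destruct (sup_approx S U (RiemannInt (Hint 1 1 Rlt_0_1 (Rle_refl 1)))) as [L [HL Happrox]].
  { intros y [a [b [Ha [Hb [pr ->]]]]]. now apply Hbound. }
  { exists 1, 1. split; [lra|]. split; [lra|]. eexists; reflexivity. }
  exists L. intros eps Heps.
  destruct (Happrox eps Heps) as [y [[a0 [b0 [Ha0 [Hb0 [pr0 ->]]]]] Hy]].
  exists a0, b0. split; [lra|]. intros a b Ha Ha0' Hb0'.
  set (pr := Hint a b Ha ltac:(lra)). exists pr.
  assert (Hle : RiemannInt pr <= L)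
    by (apply HL; exists a, b; split; [lra|]; split; [lra|]; exists pr; reflexivity).
  assert (pr1 : Riemann_integrable f a a0) by (apply Hint; lra).
  assert (pr2 : Riemann_integrable f a0 b) by (apply Hint; lra).
  assert (pr3 : Riemann_integrable f b0 b) by (apply Hint; lra).
  pose proof (RiemannInt_P26 pr1 pr2 pr) as Hchasles1.
  pose proof (RiemannInt_P26 pr0 pr3 pr2) as Hchasles2.
  pose proof (RiemannInt_nonneg _ _ _ pr1 (Rlt_le _ _ Ha0') ltac:(intros t Ht; apply Hpos; lra)).
  pose proof (RiemannInt_nonneg _ _ _ pr3 (Rlt_le _ _ Hb0') ltac:(intros t Ht; apply Hpos; lra)).
  apply Rabs_def1; lra.
Qed.

(** * Positivity of the Gamma function *)

Definition gamma_integrand (s t : R) : R := Rpower t (s - 1) * exp (- t).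

Lemma gamma_integrand_pe s t : gamma_integrand s t = pe 1 (s - 1) 1 t.
Proof. unfold gamma_integrand, pe. ring_simplify (1 * t). ring. Qed.

Lemma gamma_integrand_integrable s a b :
  0 < a -> a <= b -> Riemann_integrable (gamma_integrand s) a b.
Proof.
  intros Ha Hab. apply continuity_implies_RiemannInt; [lra|]. intros x Hx.
  apply (continuity_pt_ext (pe 1 (s - 1) 1)); [intro; now rewrite gamma_integrand_pe|].
  apply pe_continuous; lra.
Qed.

(* Exponential tail:  t^{s-1} e^{-t} <= K e^{-t/2}  for t >= 1, with
   K = (2k)^k for an integer k >= s - 1 (using t^k <= (2k)^k e^{t/2}). *)
Lemma gamma_integrand_tail s : exists K, 0 < K /\ forall t, 1 <= t ->
  gamma_integrand s t <= pe K 0 (/ 2) t.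
Proof.
  destruct (INR_unbounded s) as [n Hn].
  set (k := S n).
  assert (Hk : s - 1 <= INR k) by (unfold k; rewrite S_INR; lra).
  assert (Hk1 : 1 <= INR k) by (unfold k; rewrite S_INR; pose proof (pos_INR n); lra).
  exists ((2 * INR k) ^ k). split; [apply pow_lt; lra|].
  intros t Ht. unfold pe, gamma_integrand. rewrite Rpower_O by lra.
  set (y := t / (2 * INR k)).
  assert (Hy : 0 <= y) by (unfold y; apply Rcomplements.Rdiv_le_0_compat; lra).
  assert (Hpow : Rpower t (s - 1) <= t ^ k).
  { rewrite <- Rpower_pow by lra. apply Rle_Rpower; lra. }
  assert (Hpoly : t ^ k <= (2 * INR k) ^ k * exp (/ 2 * t)).
  { replace t with (2 * INR k * y) at 1 by (unfold y; field; lra).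
    rewrite Rpow_mult_distr. apply Rmult_le_compat_l; [apply pow_le; lra|].
    replace (/ 2 * t) with (INR k * y) by (unfold y; field; lra).
    replace (exp (INR k * y)) with (exp y ^ k)
      by (rewrite <- Rpower_pow by apply exp_pos; unfold Rpower; now rewrite ln_exp, Rmult_comm).
    apply pow_incr. pose proof (exp_ineq1_le y). lra. }
  assert (Hsplit : exp (/ 2 * t) * exp (- t) = exp (- (/ 2 * t))).
  { rewrite <- exp_plus. f_equal. lra. }
  pose proof (exp_pos (- t)).
  apply Rle_trans with (t ^ k * exp (- t)); [apply Rmult_le_compat_r; lra|].
  rewrite Rmult_1_r, <- Hsplit, <- Rmult_assoc. apply Rmult_le_compat_r; lra.
Qed.

Lemma gamma_integrand_lower s t : 1 <= t <= 2 ->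
  exp (- (Rabs (s - 1) * ln 2)) * exp (- 2) <= gamma_integrand s t.
Proof.
  intro Ht. unfold gamma_integrand, Rpower.
  assert (H0 : 0 <= ln t) by (rewrite <- ln_1; apply ln_le; lra).
  assert (H2 : ln t <= ln 2) by (apply ln_le; lra).
  pose proof (Rabs_pos (s - 1)). pose proof (Rle_abs (- (s - 1))). rewrite Rabs_Ropp in *.
  apply Rmult_le_compat; try (left; apply exp_pos); apply exp_le; nra.
Qed.

(* Head  int_a^1 t^{s-1} <= 1/s  and tail  int_1^b K e^{-t/2} <= 2K  bound the
   integrals, so the improper integral defining Gamma(s) exists. *)
Lemma gamma_integral_exists s : 0 < s ->
  exists L, improper_int_0_inf (gamma_integrand s) L.
Proof.
  intro Hs. destruct (gamma_integrand_tail s) as [K [HK Htail]].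
  apply (improper_int_0_inf_exists _ (1 / s + 2 * K)).
  - intros; now apply gamma_integrand_integrable.
  - intros t _. rewrite gamma_integrand_pe. apply pe_nonneg; lra.
  - intros a b pr Ha Hb.
    pose proof (gamma_integrand_integrable s a 1 (proj1 Ha) (proj2 Ha)) as pr1.
    pose proof (gamma_integrand_integrable s 1 b Rlt_0_1 Hb) as pr2.
    rewrite <- (RiemannInt_P26 pr1 pr2 pr).
    (* on [a, 1]:  t^{s-1} e^{-t} <= t^{s-1} *)
    assert (Hhead : RiemannInt pr1 <= 1 / s).
    { pose proof (pe_integrable 1 (s - 1) 0 a 1 (proj1 Ha) (proj2 Ha)) as q.
      apply Rle_trans with (RiemannInt q).
      - apply RiemannInt_P19; [lra|]. intros t Ht.
        rewrite gamma_integrand_pe. unfold pe. apply Rmult_le_compat_l.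
        + pose proof (Rpower_pos t (s - 1)); lra.
        + apply exp_le. lra.
      - rewrite (RiemannInt_power 1 s a 1 q (proj1 Ha) (proj2 Ha) Hs).
        replace (Rpower 1 s) with 1 by (unfold Rpower; now rewrite ln_1, Rmult_0_r, exp_0).
        pose proof (Rpower_pos a s).
        assert (0 <= 1 / s * Rpower a s)
          by (apply Rmult_le_pos; [apply Rcomplements.Rdiv_le_0_compat|]; lra).
        lra. }
    assert (Htl : RiemannInt pr2 <= 2 * K).
    { pose proof (pe_integrable K 0 (/ 2) 1 b Rlt_0_1 Hb) as q.
      apply Rle_trans with (RiemannInt q).
      - apply RiemannInt_P19; [lra|]. intros t Ht. apply Htail. lra.
      - rewrite (RiemannInt_exponential K (/ 2) 1 b q Rlt_0_1 Hb ltac:(lra)).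
        assert (exp (- (/ 2 * 1)) <= exp 0) by (apply exp_le; lra). rewrite exp_0 in *.
        pose proof (exp_pos (- (/ 2 * b))).
        replace (K / / 2) with (2 * K) by (field; lra). nra. }
    lra.
Qed.

(* Any value of the improper integral dominates int_1^2, hence is positive. *)
Lemma gamma_integral_pos s L : improper_int_0_inf (gamma_integrand s) L -> 0 < L.
Proof.
  intro HL.
  set (c0 := exp (- (Rabs (s - 1) * ln 2)) * exp (- 2)).
  assert (Hc0 : 0 < c0) by (apply Rmult_lt_0_compat; apply exp_pos).
  destruct (HL (c0 / 2) ltac:(lra)) as [d [M [Hd HdM]]].
  set (a := Rmin (d / 2) 1). set (b := Rmax (M + 1) 2).
  assert (Ha : 0 < a) by (apply Rmin_glb_lt; lra).
  assert (Ha1 : a <= 1) by apply Rmin_r.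
  assert (Had : a < d) by (unfold a; pose proof (Rmin_l (d / 2) 1); lra).
  assert (HbM : M < b) by (unfold b; pose proof (Rmax_l (M + 1) 2); lra).
  assert (Hb2 : 2 <= b) by apply Rmax_r.
  destruct (HdM a b Ha Had HbM) as [pr Hpr].
  pose proof (gamma_integrand_integrable s a 1 Ha Ha1) as pr1.
  pose proof (gamma_integrand_integrable s 1 b Rlt_0_1 ltac:(lra)) as pr2.
  pose proof (gamma_integrand_integrable s 1 2 Rlt_0_1 ltac:(lra)) as pr3.
  pose proof (gamma_integrand_integrable s 2 b ltac:(lra) Hb2) as pr4.
  pose proof (RiemannInt_P26 pr1 pr2 pr). pose proof (RiemannInt_P26 pr3 pr4 pr2).
  assert (Hnonneg : forall t, 0 < t -> 0 <= gamma_integrand s t)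
    by (intros t _; rewrite gamma_integrand_pe; apply pe_nonneg; lra).
  pose proof (RiemannInt_nonneg _ _ _ pr1 Ha1 ltac:(intros; apply Hnonneg; lra)).
  pose proof (RiemannInt_nonneg _ _ _ pr4 Hb2 ltac:(intros; apply Hnonneg; lra)).
  pose proof (RiemannInt_P19 (Riemann_integrable_const c0 1 2) pr3 ltac:(lra)
    ltac:(intros; apply gamma_integrand_lower; lra)) as Hmid.
  rewrite RiemannInt_const in Hmid.
  apply Rabs_def2 in Hpr. lra.
Qed.

(* Gamma(s) > 0: Gamma_fn picks a value of an improper integral that exists. *)
Lemma Gamma_pos s : 0 < s -> 0 < Gamma_fn s.
Proof.
  intro Hs. apply (gamma_integral_pos s).
  exact (epsilon_spec (inhabits 0) _ (gamma_integral_exists s Hs)).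
Qed.

(** * The Nakagami CDF near zero:  F(x) ~ (m^m / (m Gamma(m))) x^m *)

Definition nak_const (m : R) : R := Rpower m m / Gamma_fn m.

Lemma nak_const_pos m : 0 < m -> 0 < nak_const m.
Proof.
  intro Hm. apply Rmult_lt_0_compat; [apply Rpower_pos | apply Rinv_0_lt_compat, Gamma_pos, Hm].
Qed.

Lemma nak_density_pe m t : 0 < t -> nak_density m t = pe (nak_const m) (m - 1) m t.
Proof.
  intro Ht. unfold nak_density, pe, nak_const. destruct (Rle_dec t 0); [lra|].
  unfold Rdiv. ring.
Qed.

Lemma nak_density_integrable m a b : 0 < a -> a <= b ->
  Riemann_integrable (nak_density m) a b.
Proof.
  intros Ha Hab. apply continuity_implies_RiemannInt; [lra|]. intros x Hx.
  apply (continuity_pt_locally_ext (pe (nak_const m) (m - 1) m) _ x x); [lra | |].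
  - intros y Hy. unfold Rdist in Hy. apply Rabs_def2 in Hy.
    symmetry; apply nak_density_pe; lra.
  - apply pe_continuous; lra.
Qed.

(* For 0 < a <= x, comparing e^{-mt} with e^{-mx} and with 1 on [a, x]:
   C e^{-mx} (x^m - a^m)/m <= int_a^x f <= C (x^m - a^m)/m. *)
Lemma nak_partial_bounds m a x (pr : Riemann_integrable (nak_density m) a x) :
  0 < m -> 0 < a -> a <= x ->
  nak_const m * exp (- (m * x)) / m * Rpower x m
    - nak_const m * exp (- (m * x)) / m * Rpower a m <= RiemannInt pr
  <= nak_const m / m * Rpower x m - nak_const m / m * Rpower a m.
Proof.
  intros Hm Ha Hax. pose proof (nak_const_pos m Hm) as HC.
  assert (Hkernel : forall c t, a <= t <= x -> pe c (m - 1) 0 t = c * Rpower t (m - 1)).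
  { intros c t _. unfold pe. rewrite Rmult_0_l, Ropp_0, exp_0. ring. }
  split.
  - pose proof (pe_integrable (nak_const m * exp (- (m * x))) (m - 1) 0 a x Ha Hax) as q.
    rewrite <- (RiemannInt_power _ m a x q Ha Hax Hm).
    apply RiemannInt_P19; [lra|]. intros t Ht.
    rewrite Hkernel, nak_density_pe by lra. unfold pe.
    pose proof (Rpower_pos t (m - 1)).
    assert (exp (- (m * x)) <= exp (- (m * t))) by (apply exp_le; nra).
    assert (0 <= nak_const m * Rpower t (m - 1)) by (apply Rmult_le_pos; lra). nra.
  - pose proof (pe_integrable (nak_const m) (m - 1) 0 a x Ha Hax) as q.
    rewrite <- (RiemannInt_power _ m a x q Ha Hax Hm).
    apply RiemannInt_P19; [lra|]. intros t Ht.
    rewrite Hkernel, nak_density_pe by lra. unfold pe.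
    pose proof (Rpower_pos t (m - 1)).
    assert (exp (- (m * t)) <= exp 0) by (apply exp_le; nra). rewrite exp_0 in *.
    assert (0 <= nak_const m * Rpower t (m - 1)) by (apply Rmult_le_pos; lra). nra.
Qed.

(* Letting a -> 0 in the previous bounds. *)
Lemma nak_cdf_bounds m x : 0 < m -> 0 < x ->
  nak_const m * exp (- (m * x)) / m * Rpower x m <= nak_cdf m x
  <= nak_const m / m * Rpower x m.
Proof.
  intros Hm Hx. pose proof (nak_const_pos m Hm) as HC.
  assert (Hnn : forall a, 0 <= nak_const m / m * Rpower a m).
  { intro a. pose proof (Rpower_pos a m).
    apply Rmult_le_pos; [apply Rcomplements.Rdiv_le_0_compat|]; lra. }
  unfold nak_cdf. destruct (Rle_dec x 0); [lra|].
  assert (Hex : exists L, improper_int_0 (nak_density m) x L).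
  { apply (improper_int_0_exists _ x (nak_const m / m * Rpower x m) Hx).
    - intros; now apply nak_density_integrable.
    - intros t Ht. rewrite nak_density_pe by lra. apply pe_nonneg; lra.
    - intros a pr Ha. pose proof (Hnn a).
      pose proof (nak_partial_bounds m a x pr Hm (proj1 Ha) (proj2 Ha)). lra. }
  pose proof (epsilon_spec (inhabits 0) _ Hex) as HL.
  set (L := epsilon _ _) in *.
  set (D := nak_const m * exp (- (m * x)) / m).
  assert (HD : 0 < D).
  { apply Rdiv_lt_0_compat; [apply Rmult_lt_0_compat; [lra | apply exp_pos] | lra]. }
  split; apply le_epsilon; intros eps Heps.
  - (* choose a with D a^m <= eps/2 *)
    destruct (HL (eps / 2) ltac:(lra)) as [d [Hd Hdd]].
    set (eta := eps / 2 / D).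
    assert (Heta : 0 < eta) by (apply Rdiv_lt_0_compat; lra).
    set (a := Rmin (d / 2) (Rmin x (Rpower eta (/ m)))).
    assert (Ha : 0 < a) by (apply Rmin_glb_lt; [lra | apply Rmin_glb_lt; [lra | apply Rpower_pos]]).
    assert (Had : a < d) by (unfold a; pose proof (Rmin_l (d / 2) (Rmin x (Rpower eta (/ m)))); lra).
    assert (Hax : a <= x) by (eapply Rle_trans; [apply Rmin_r | apply Rmin_l]).
    assert (Ham : Rpower a m <= eta).
    { apply Rle_trans with (Rpower (Rpower eta (/ m)) m).
      - apply Rle_Rpower_l; [lra|]. split; [lra|]. eapply Rle_trans; [apply Rmin_r | apply Rmin_r].
      - rewrite Rpower_mult. replace (/ m * m) with 1 by (field; lra). rewrite Rpower_1; lra. }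
    destruct (Hdd a Ha Had) as [pr Hpr]. apply Rabs_def2 in Hpr.
    destruct (nak_partial_bounds m a x pr Hm Ha Hax) as [Hlow _]. fold D in Hlow.
    assert (D * Rpower a m <= eps / 2).
    { apply Rle_trans with (D * eta); [apply Rmult_le_compat_l; lra|]. unfold eta. right. field. lra. }
    lra.
  - destruct (HL eps Heps) as [d [Hd Hdd]].
    set (a := Rmin (d / 2) x).
    assert (Ha : 0 < a) by (apply Rmin_glb_lt; lra).
    assert (Had : a < d) by (unfold a; pose proof (Rmin_l (d / 2) x); lra).
    destruct (Hdd a Ha Had) as [pr Hpr]. apply Rabs_def2 in Hpr.
    destruct (nak_partial_bounds m a x pr Hm Ha (Rmin_r _ _)) as [_ Hup].
    pose proof (Hnn a). lra.
Qed.

Lemma is_lim_mult_fin (f g : R -> R) (a b : R) :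
  is_lim f p_infty a -> is_lim g p_infty b -> is_lim (fun P => f P * g P) p_infty (a * b).
Proof. intros Hf Hg. exact (is_lim_mult f g p_infty a b Hf Hg I). Qed.

Lemma is_lim_pow_fin (f : R -> R) (a : R) (n : nat) :
  is_lim f p_infty a -> is_lim (fun P => f P ^ n) p_infty (a ^ n).
Proof.
  intro Hf. induction n as [|n IH]; simpl; [apply is_lim_const | now apply is_lim_mult_fin].
Qed.

Lemma is_lim_list_sum {A} (T : A -> R -> R) (c : A -> R) (l : list A) :
  (forall s, In s l -> is_lim (T s) p_infty (c s)) ->
  is_lim (fun P => fold_right (fun s acc => T s P + acc) 0 l) p_infty
         (fold_right (fun s acc => c s + acc) 0 l).
Proof.
  induction l as [|s l IH]; intro H; simpl; [apply is_lim_const|].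
  apply is_lim_plus'; [apply H; now left | apply IH; intros; apply H; now right].
Qed.

(* P^{-m} -> 0, since P^m = exp (m ln P) -> +oo. *)
Lemma is_lim_inv_Rpower m : 0 < m -> is_lim (fun P => / Rpower P m) p_infty 0.
Proof.
  intro Hm.
  apply (is_lim_inv (fun P => Rpower P m) p_infty p_infty); [| discriminate].
  apply (is_lim_comp exp (fun P => m * ln P) p_infty p_infty p_infty).
  - apply is_lim_exp_p.
  - assert (Hmul : Rbar_mult m p_infty = p_infty).
    { simpl. unfold Rbar_mult'. destruct (Rle_dec 0 m) as [h|h]; [|lra].
      destruct (Rle_lt_or_eq_dec 0 m h); [reflexivity | lra]. }
    rewrite <- Hmul at 2. apply is_lim_scal_l, is_lim_ln_p.
  - exists 0. intros y _. discriminate.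
Qed.

Lemma nak_cdf_scaled_limit m beta : 0 < m -> 0 < beta ->
  is_lim (fun P => nak_cdf m (beta / P) * Rpower P m) p_infty (nak_const m / m * Rpower beta m).
Proof.
  intros Hm Hb.
  set (u := nak_const m / m * Rpower beta m).
  assert (Hu : 0 < u).
  { apply Rmult_lt_0_compat; [apply Rdiv_lt_0_compat; [apply nak_const_pos|]|apply Rpower_pos]; lra. }
  apply (is_lim_le_le_loc (fun P => u * (1 + (- (m * beta)) * / P)) (fun _ => u)).
  - exists 0. intros P HP.
    assert (Hx : 0 < beta / P) by (apply Rdiv_lt_0_compat; lra).
    destruct (nak_cdf_bounds m (beta / P) Hm Hx) as [Hlow Hup].
    assert (Hscale : Rpower (beta / P) m * Rpower P m = Rpower beta m).
    { rewrite Rpower_mult_distr by lra. f_equal. field. lra. }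
    pose proof (Rpower_pos P m).
    pose proof (exp_ineq1_le (- (m * (beta / P)))).
    apply Rmult_le_compat_r with (r := Rpower P m) in Hlow, Hup; try lra.
    rewrite Rmult_assoc, Hscale in Hlow, Hup. fold u in Hup.
    split; [| exact Hup].
    replace (u * (1 + - (m * beta) * / P)) with (u * (1 + - (m * (beta / P)))) by (field; lra).
    eapply Rle_trans; [| exact Hlow].
    replace (nak_const m * exp (- (m * (beta / P))) / m * Rpower beta m)
      with (u * exp (- (m * (beta / P)))) by (unfold u, Rdiv; ring).
    apply Rmult_le_compat_l; lra.
  - replace (Finite u) with (Finite (u * (1 + - (m * beta) * 0))) by (f_equal; ring).
    apply is_lim_mult_fin; [apply is_lim_const|].
    apply is_lim_plus'; [apply is_lim_const|].
    apply is_lim_mult_fin; [apply is_lim_const|].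
    apply (is_lim_inv (fun P => P) p_infty p_infty); [apply is_lim_id | discriminate].
  - apply is_lim_const.
Qed.

Lemma nak_cdf_vanishes m beta : 0 < m -> 0 < beta ->
  is_lim (fun P => nak_cdf m (beta / P)) p_infty 0.
Proof.
  intros Hm Hb.
  apply (is_lim_ext_loc (fun P => nak_cdf m (beta / P) * Rpower P m * / Rpower P m)).
  - exists 0. intros P _. field. apply Rgt_not_eq, Rpower_pos.
  - replace (Finite 0) with (Finite (nak_const m / m * Rpower beta m * 0)) by (f_equal; ring).
    apply is_lim_mult_fin; [now apply nak_cdf_scaled_limit | now apply is_lim_inv_Rpower].
Qed.

(* A pattern s : list bool records, for each block b, whether gamma_b is above
   the threshold (true) or below it (false).  [bool_lists n] enumerates all
   patterns of length n. *)
Fixpoint bool_lists (n : nat) : list (list bool) :=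
  match n with
  | O => [[]]
  | S n => map (cons true) (bool_lists n) ++ map (cons false) (bool_lists n)
  end.

Lemma bool_lists_complete n s : length s = n -> In s (bool_lists n).
Proof.
  revert s; induction n as [|n IH]; intros s Hs.
  - destruct s; [now left | discriminate].
  - destruct s as [|b s]; [discriminate|]. injection Hs as Hs. simpl.
    apply in_or_app. destruct b; [left | right]; apply in_map; now apply IH.
Qed.

Lemma bool_lists_length n s : In s (bool_lists n) -> length s = n.
Proof.
  revert s; induction n as [|n IH]; intros s Hs; simpl in Hs.
  - destruct Hs as [<- | []]; reflexivity.
  - apply in_app_or in Hs.
    destruct Hs as [Hs|Hs]; apply in_map_iff in Hs; destruct Hs as [t [<- Ht]];
      simpl; f_equal; now apply IH.
Qed.

Lemma bool_lists_NoDup n : NoDup (bool_lists n).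
Proof.
  induction n as [|n IH]; simpl.
  - constructor; [intros [] | constructor].
  - apply NoDup_app; try (apply Injective_map_NoDup; [intros x y H; now injection H | exact IH]).
    intros x Hx Hy. apply in_map_iff in Hx, Hy.
    destruct Hx as [a [<- _]], Hy as [b [Hb _]]. discriminate.
Qed.

Fixpoint n_true (s : list bool) : nat :=
  match s with [] => O | b :: s => ((if b then 1 else 0) + n_true s)%nat end.
Fixpoint n_false (s : list bool) : nat :=
  match s with [] => O | b :: s => ((if b then 0 else 1) + n_false s)%nat end.

Lemma n_true_false s : (n_true s + n_false s)%nat = length s.
Proof. induction s as [|b s IH]; simpl; [reflexivity | destruct b; simpl; lia]. Qed.

Lemma pattern_with_n_false n k : (k <= n)%nat ->
  exists s, length s = n /\ n_false s = k.
Proof.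
  revert k; induction n as [|n IH]; intros k Hk.
  - exists []. simpl. lia.
  - destruct k as [|k].
    + destruct (IH O ltac:(lia)) as [s [Hl Hf]]. exists (true :: s). simpl. lia.
    + destruct (IH k ltac:(lia)) as [s [Hl Hf]]. exists (false :: s). simpl. lia.
Qed.

Lemma prod_f_R0_ext f g n : (forall i, f i = g i) -> prod_f_R0 f n = prod_f_R0 g n.
Proof. intro H. induction n as [|n IH]; simpl; rewrite ?IH; now rewrite ?H. Qed.

Lemma prod_f_R0_shift f n : prod_f_R0 f (S n) = f O * prod_f_R0 (fun i => f (S i)) n.
Proof.
  induction n as [|n IH]; [reflexivity|].
  change (prod_f_R0 f (S (S n))) with (prod_f_R0 f (S n) * f (S (S n))).
  rewrite IH. simpl. ring.
Qed.

Lemma prod_pattern (a c : R) x s :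
  prod_f_R0 (fun b => if nth b (x :: s) false then a else c) (length s)
  = a ^ n_true (x :: s) * c ^ n_false (x :: s).
Proof.
  revert x; induction s as [|y s IH]; intro x.
  - destruct x; simpl; ring.
  - simpl length. rewrite prod_f_R0_shift.
    transitivity ((if x then a else c)
      * prod_f_R0 (fun b => if nth b (y :: s) false then a else c) (length s)); [reflexivity|].
    rewrite IH. destruct x; simpl; ring.
Qed.

Lemma sum_pattern (a : R) x s :
  sum_f_R0 (fun b => if nth b (x :: s) false then a else 0) (length s)
  = a * INR (n_true (x :: s)).
Proof.
  revert x; induction s as [|y s IH]; intro x.
  - destruct x; simpl; ring.
  - simpl length. rewrite decomp_sum by lia.
    transitivity ((if x then a else 0)
      + sum_f_R0 (fun b => if nth b (y :: s) false then a else 0) (length s)); [reflexivity|].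
    rewrite IH. change (n_true (x :: y :: s)) with ((if x then 1 else 0) + n_true (y :: s))%nat.
    rewrite plus_INR. destruct x; simpl; ring.
Qed.

(** * Decomposition of the outage event over fading patterns *)

Section Outage_decomposition.

Variables (Omega : Type) (Pr : (Omega -> Prop) -> R).
Variables (m : R) (B : nat) (gam : nat -> Omega -> R).

Hypothesis Pr_ext : forall A C : Omega -> Prop, (forall w, A w <-> C w) -> Pr A = Pr C.
Hypothesis Pr_add : forall A C : Omega -> Prop, (forall w, ~ (A w /\ C w)) ->
  Pr (fun w => A w \/ C w) = Pr A + Pr C.
Hypothesis Pr_iid : forall lo hi : nat -> option R,
  (forall b x y, (b < B)%nat -> lo b = Some x -> hi b = Some y -> x <= y) ->
  Pr (fun w => forall b, (b < B)%nat -> in_range (lo b) (hi b) (gam b w)) =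
  prod_f_R0 (fun b => cdf_hi m (hi b) - cdf_lo m (lo b)) (B - 1).
Hypothesis B_pos : (1 <= B)%nat.

Definition follows_pattern (s : list bool) (t : R) (w : Omega) : Prop :=
  forall b, (b < B)%nat ->
    (nth b s false = true -> t <= gam b w) /\ (nth b s false = false -> gam b w < t).

(* The impossible event has probability zero (additivity with itself). *)
Lemma Pr_empty : Pr (fun _ => False) = 0.
Proof.
  pose proof (Pr_add (fun _ => False) (fun _ => False) ltac:(intros w [[] _])) as H.
  cbv beta in H.
  rewrite (Pr_ext (fun w => False \/ False) (fun _ => False)) in H by tauto. lra.
Qed.

Lemma Pr_pattern s t : length s = B ->
  Pr (follows_pattern s t) = (1 - nak_cdf m t) ^ n_true s * nak_cdf m t ^ n_false s.
Proof.
  intro Hs.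
  set (lo := fun b => if nth b s false then Some t else None).
  set (hi := fun b => if nth b s false then None else Some t).
  rewrite (Pr_ext _ (fun w => forall b, (b < B)%nat -> in_range (lo b) (hi b) (gam b w))).
  - rewrite Pr_iid.
    + destruct s as [|x s]; [simpl in Hs; lia|].
      replace (B - 1)%nat with (length s) by (simpl in Hs; lia).
      rewrite <- prod_pattern. apply prod_f_R0_ext. intro b.
      unfold lo, hi. destruct (nth b (x :: s) false); simpl; ring.
    + intros b x y _. unfold lo, hi. destruct (nth b s false); congruence.
  - intro w. unfold follows_pattern, in_range, lo, hi.
    split; intros H b Hb; specialize (H b Hb); destruct (nth b s false); simpl in *.
    + split; [apply H | exact I]; reflexivity.
    + split; [exact I | apply H]; reflexivity.
    + split; [tauto | discriminate].
    + split; [discriminate | tauto].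
Qed.

Lemma Pr_disjoint_union (Q : list bool -> Omega -> Prop) (l : list (list bool)) :
  NoDup l ->
  (forall s s', In s l -> In s' l -> s <> s' -> forall w, ~ (Q s w /\ Q s' w)) ->
  Pr (fun w => exists s, In s l /\ Q s w) = fold_right (fun s acc => Pr (Q s) + acc) 0 l.
Proof.
  induction l as [|s l IH]; intros Hnd Hdis; simpl.
  - rewrite <- Pr_empty. apply Pr_ext. intro w. split; [intros [s [[] _]] | intros []].
  - inversion Hnd as [|? ? Hnotin Hnd']; subst.
    rewrite (Pr_ext _ (fun w => Q s w \/ (exists s0, In s0 l /\ Q s0 w))).
    + rewrite Pr_add, IH; [reflexivity | exact Hnd' | intros; apply Hdis; simpl; auto |].
      intros w [H1 [s' [Hs' H2]]].
      refine (Hdis s s' (or_introl eq_refl) (or_intror Hs') _ w (conj H1 H2)).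
      intros ->. contradiction.
    + intro w. split.
      * intros [s0 [[<- | Hin] Hq]]; [left | right; exists s0]; auto.
      * intros [Hq | [s0 [Hin Hq]]]; [exists s | exists s0]; auto.
Qed.

Lemma pattern_unique s s' t w : length s = B -> length s' = B ->
  follows_pattern s t w -> follows_pattern s' t w -> s = s'.
Proof.
  intros Hs Hs' H1 H2. apply (nth_ext s s' false false); [congruence|].
  intros n Hn. rewrite Hs in Hn.
  destruct (H1 n Hn) as [a1 b1], (H2 n Hn) as [a2 b2].
  destruct (nth n s false), (nth n s' false); auto.
  - specialize (a1 eq_refl). specialize (b2 eq_refl). lra.
  - specialize (a2 eq_refl). specialize (b1 eq_refl). lra.
Qed.

Definition pattern_of (t : R) (w : Omega) : list bool :=
  map (fun b => if Rle_dec t (gam b w) then true else false) (seq 0 B).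

Lemma pattern_of_length t w : length (pattern_of t w) = B.
Proof. unfold pattern_of. now rewrite length_map, length_seq. Qed.

Lemma pattern_of_follows t w : follows_pattern (pattern_of t w) t w.
Proof.
  intros b Hb. unfold pattern_of.
  rewrite nth_indep with (d' := (fun b => if Rle_dec t (gam b w) then true else false) O)
    by (rewrite length_map, length_seq; exact Hb).
  rewrite (map_nth (fun b => if Rle_dec t (gam b w) then true else false) (seq 0 B) O b).
  rewrite seq_nth by exact Hb. simpl.
  destruct (Rle_dec t (gam b w)); split; intro H; try discriminate; lra.
Qed.

Lemma info_on_pattern (I : R -> R) beta P s w : 0 < P -> length s = B ->
  follows_pattern s (beta / P) w ->
  sum_f_R0 (fun b => I_thr I beta (P * gam b w)) (B - 1) = I beta * INR (n_true s).
Proof.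
  intros HP Hs Hw.
  destruct s as [|x s]; [simpl in Hs; lia|].
  replace (B - 1)%nat with (length s) by (simpl in Hs; lia).
  rewrite <- sum_pattern. apply sum_eq. intros i Hi.
  destruct (Hw i ltac:(simpl in Hs; lia)) as [Habove Hbelow]. unfold I_thr.
  destruct (nth i (x :: s) false); destruct (Rle_dec beta (P * gam i w)) as [h|h]; try reflexivity.
  - exfalso. apply h. specialize (Habove eq_refl).
    apply (Rmult_le_compat_l P) in Habove; [|lra].
    replace (P * (beta / P)) with beta in Habove by (field; lra). exact Habove.
  - exfalso. specialize (Hbelow eq_refl).
    apply (Rmult_lt_compat_l P) in Hbelow; [|lra].
    replace (P * (beta / P)) with beta in Hbelow by (field; lra). lra.
Qed.

(* Contribution of a pattern to the outage probability, F being F(beta/P). *)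
Definition outage_term (Ib Rt F : R) (s : list bool) : R :=
  if Rlt_dec (Ib * INR (n_true s) / INR B) Rt
  then (1 - F) ^ n_true s * F ^ n_false s else 0.

Lemma outage_decomposition (I : R -> R) beta Rt P : 0 < P ->
  Pr (fun w => sum_f_R0 (fun b => I_thr I beta (P * gam b w)) (B - 1) / INR B < Rt) =
  fold_right (fun s acc => outage_term (I beta) Rt (nak_cdf m (beta / P)) s + acc) 0
    (bool_lists B).
Proof.
  intro HP. set (t := beta / P).
  set (Q := fun s w => I beta * INR (n_true s) / INR B < Rt /\ follows_pattern s t w).
  rewrite (Pr_ext _ (fun w => exists s, In s (bool_lists B) /\ Q s w)).
  - rewrite Pr_disjoint_union.
    + pose proof (bool_lists_length B) as Hlen.
      induction (bool_lists B) as [|s l IH]; simpl; [reflexivity|].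
      rewrite IH by (intros; apply Hlen; now right). f_equal.
      unfold Q, outage_term. destruct Rlt_dec as [h|h].
      * rewrite <- Pr_pattern by (apply Hlen; now left). apply Pr_ext. tauto.
      * rewrite <- Pr_empty. apply Pr_ext. tauto.
    + apply bool_lists_NoDup.
    + intros s s' Hs Hs' Hne w [[_ H1] [_ H2]].
      apply Hne, (pattern_unique s s' t w); auto using bool_lists_length.
  - intro w. split.
    + intro H. exists (pattern_of t w).
      split; [apply bool_lists_complete, pattern_of_length|].
      split; [|apply pattern_of_follows].
      now rewrite <- (info_on_pattern I beta P _ w HP (pattern_of_length t w) (pattern_of_follows t w)).
    + intros [s [Hs [Hout Hw]]].
      now rewrite (info_on_pattern I beta P s w HP (bool_lists_length _ _ Hs) Hw).
Qed.

End Outage_decomposition.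

(** * The diversity order *)

Lemma diversity_order_spec B Rt Ib : (1 <= B)%nat -> 0 < Rt -> Rt <= Ib -> 0 < Ib ->
  exists dn, IZR (d_beta B Rt Ib) = INR dn /\ (1 <= dn <= B)%nat /\
    forall j, (j <= B)%nat -> (Ib * INR (B - j) / INR B < Rt <-> (dn <= j)%nat).
Proof.
  intros HB HR HRI HI.
  set (x := INR B * (1 - Rt / Ib)). set (z := Int_part x).
  assert (HBpos : 0 < INR B) by (apply lt_0_INR; lia).
  assert (Hratio : 0 < Rt / Ib <= 1).
  { split; [apply Rdiv_lt_0_compat; lra|].
    apply Rcomplements.Rle_div_l; lra. }
  assert (Hx : 0 <= x < INR B) by (unfold x; split; nra).
  destruct (base_Int_part x) as [Hz1 Hz2]. fold z in Hz1, Hz2.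
  assert (Hz : (0 <= z < Z.of_nat B)%Z).
  { split.
    - assert (Hm1 : (-1 < z)%Z) by (apply lt_IZR; simpl; lra). lia.
    - apply lt_IZR. rewrite <- INR_IZR_INZ. lra. }
  exists (Z.to_nat (1 + z)). split; [|split].
  - unfold d_beta. fold x z. rewrite INR_IZR_INZ, Z2Nat.id by lia. reflexivity.
  - lia.
  - intros j Hj.
    assert (Hid : Ib * INR (B - j) / INR B - Rt = Ib / INR B * (x - INR j)).
    { rewrite minus_INR by exact Hj. unfold x. field. split; lra. }
    assert (Hpos : 0 < Ib / INR B) by (apply Rdiv_lt_0_compat; lra).
    assert (Hiff : Ib * INR (B - j) / INR B < Rt <-> x < INR j).
    { split; intro H.
      - destruct (Rlt_dec x (INR j)) as [h|h]; [exact h|].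
        assert (0 <= Ib / INR B * (x - INR j)) by (apply Rmult_le_pos; lra). lra.
      - assert (Ib / INR B * (x - INR j) < 0) by (rewrite <- (Rmult_0_r (Ib / INR B));
          apply Rmult_lt_compat_l; lra). lra. }
    rewrite Hiff, INR_IZR_INZ. split; intro H.
    + assert (z < Z.of_nat j)%Z by (apply lt_IZR; lra). lia.
    + assert (Hle : (1 + z <= Z.of_nat j)%Z) by lia.
      apply IZR_le in Hle. rewrite plus_IZR in Hle. lra.
Qed.

Lemma fold_right_sum_mult_r {A} (f : A -> R) (c : R) (l : list A) :
  fold_right (fun s acc => f s + acc) 0 l * c = fold_right (fun s acc => f s * c + acc) 0 l.
Proof. induction l as [|s l IH]; simpl; [ring | rewrite <- IH; ring]. Qed.

Lemma fold_right_sum_pos {A} (f : A -> R) (l : list A) :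
  (forall s, In s l -> 0 <= f s) -> (exists s, In s l /\ 0 < f s) ->
  0 < fold_right (fun s acc => f s + acc) 0 l.
Proof.
  assert (Hnn : forall l, (forall s, In s l -> 0 <= f s) -> 0 <= fold_right (fun s acc => f s + acc) 0 l).
  { clear l. induction l as [|s l IH]; intro H; simpl; [lra|].
    pose proof (H s (or_introl eq_refl)). pose proof (IH (fun s' Hs' => H s' (or_intror Hs'))). lra. }
  induction l as [|s l IH]; intros H [s0 [Hin Hpos]]; [destruct Hin|]. simpl.
  pose proof (H s (or_introl eq_refl)).
  destruct Hin as [<- | Hin].
  - pose proof (Hnn l (fun s' Hs' => H s' (or_intror Hs'))). lra.
  - assert (0 < fold_right (fun s acc => f s + acc) 0 l)
      by (apply IH; [intros; apply H; now right | now exists s0]). lra.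
Qed.

Lemma pattern_term_limit (F : R -> R) (m u : R) (dn nt nf : nat) :
  is_lim F p_infty 0 -> is_lim (fun P => F P * Rpower P m) p_infty u -> (dn <= nf)%nat ->
  is_lim (fun P => (1 - F P) ^ nt * F P ^ nf * Rpower P (m * INR dn)) p_infty
         (0 ^ (nf - dn) * u ^ dn).
Proof.
  intros HF HFu Hdn.
  apply (is_lim_ext_loc (fun P => (1 - F P) ^ nt * F P ^ (nf - dn) * (F P * Rpower P m) ^ dn)).
  - exists 0. intros P HP.
    rewrite <- Rpower_mult, Rpower_pow by apply Rpower_pos.
    replace nf with ((nf - dn) + dn)%nat at 2 by lia.
    rewrite Rpow_mult_distr, pow_add. ring.
  - replace (0 ^ (nf - dn) * u ^ dn) with ((1 - 0) ^ nt * 0 ^ (nf - dn) * u ^ dn)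
      by (rewrite Rminus_0_r, pow1; ring).
    apply is_lim_mult_fin; [apply is_lim_mult_fin|]; apply is_lim_pow_fin; try assumption.
    apply is_lim_minus'; [apply is_lim_const | exact HF].
Qed.

Section Outage_limit.

Variables (B dn : nat) (Ib Rt m u : R) (F : R -> R).
Hypothesis outage_iff :
  forall j, (j <= B)%nat -> (Ib * INR (B - j) / INR B < Rt <-> (dn <= j)%nat).

(* The limit of P^{m dn} times the contribution of pattern s. *)
Definition pattern_weight (s : list bool) : R :=
  if Rlt_dec (Ib * INR (n_true s) / INR B) Rt then 0 ^ (n_false s - dn) * u ^ dn else 0.

Lemma outage_term_limit s :
  is_lim F p_infty 0 -> is_lim (fun P => F P * Rpower P m) p_infty u -> length s = B ->
  is_lim (fun P => outage_term B Ib Rt (F P) s * Rpower P (m * INR dn)) p_infty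
         (pattern_weight s).
Proof.
  intros HF HFu Hs. unfold outage_term, pattern_weight.
  destruct Rlt_dec as [Hout|Hout].
  - apply pattern_term_limit; [exact HF | exact HFu|].
    pose proof (n_true_false s) as Hcount.
    apply outage_iff; [lia|]. now replace (B - n_false s)%nat with (n_true s) by lia.
  - apply (is_lim_ext_loc (fun _ => 0)); [exists 0; intros; ring | apply is_lim_const].
Qed.

(* The limiting constant is positive: the patterns with exactly dn faded
   blocks each contribute u^dn > 0. *)
Lemma pattern_weight_sum_pos : 0 < u -> (dn <= B)%nat ->
  0 < fold_right (fun s acc => pattern_weight s + acc) 0 (bool_lists B).
Proof.
  intros Hu HdnB. apply fold_right_sum_pos.
  - intros s _. unfold pattern_weight. destruct Rlt_dec; [|lra].
    apply Rmult_le_pos; apply pow_le; lra.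
  - destruct (pattern_with_n_false B dn HdnB) as [s [Hs Hf]].
    exists s. split; [now apply bool_lists_complete|].
    unfold pattern_weight. pose proof (n_true_false s) as Hcount.
    destruct Rlt_dec as [_|Hout].
    + rewrite Hf, Nat.sub_diag. simpl. rewrite Rmult_1_l. now apply pow_lt.
    + exfalso. apply Hout. replace (n_true s) with (B - n_false s)%nat by lia.
      apply outage_iff; lia.
Qed.

End Outage_limit.

Lemma exp_equal_of_is_lim (g : R -> R) (K d : R) :
  is_lim (fun P => g P * Rpower P d) p_infty K -> exp_equal g K d.
Proof.
  intros H eps Heps. apply is_lim_spec in H.
  destruct (H (mkposreal eps Heps)) as [M HM].
  exists (Rmax M 1). split; [pose proof (Rmax_r M 1); lra|].
  intros P HP. apply HM. pose proof (Rmax_l M 1); lra.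
Qed.

Theorem mainTheorem6
  (m : R) (B : nat) (beta Rt : R) (I : R -> R)
  (Omega : Type) (Pr : (Omega -> Prop) -> R) (gam : nat -> Omega -> R) :
  0 < m -> (1 <= B)%nat -> 0 < beta -> 0 < I beta ->
  0 < Rt -> Rt <= I beta ->
  (* Pr is a (finitely additive) probability on events of Omega *)
  Pr (fun _ => True) = 1 ->
  (forall A C : Omega -> Prop, (forall w, A w <-> C w) -> Pr A = Pr C) ->
  (forall A C : Omega -> Prop, (forall w, ~ (A w /\ C w)) ->
      Pr (fun w => A w \/ C w) = Pr A + Pr C) ->
  (* gam 0, ..., gam (B-1) are i.i.d. with the Nakagami-m density nak_density m *)
  (forall lo hi : nat -> option R,
      (forall b x y, (b < B)%nat -> lo b = Some x -> hi b = Some y -> x <= y) ->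
      Pr (fun w => forall b, (b < B)%nat -> in_range (lo b) (hi b) (gam b w)) =
      prod_f_R0 (fun b => cdf_hi m (hi b) - cdf_lo m (lo b)) (B - 1)) ->
  exists K, 0 < K /\
    exp_equal
      (fun P => Pr (fun w =>
         sum_f_R0 (fun b => I_thr I beta (P * gam b w)) (B - 1) / INR B < Rt))
      K (m * IZR (d_beta B Rt (I beta))).
Proof.
  intros Hm HB Hbeta HI HR HRI _ Pr_ext Pr_add Pr_iid.
  destruct (diversity_order_spec B Rt (I beta) HB HR HRI HI) as [dn [Hd [Hdn Hout]]].
  set (u := nak_const m / m * Rpower beta m).
  set (F := fun P => nak_cdf m (beta / P)).
  exists (fold_right (fun s acc => pattern_weight B dn (I beta) Rt u s + acc) 0 (bool_lists B)).
  split.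
  - apply pattern_weight_sum_pos; [exact Hout | | lia].
    apply Rmult_lt_0_compat; [apply Rdiv_lt_0_compat; [apply nak_const_pos|] | apply Rpower_pos]; lra.
  - apply exp_equal_of_is_lim. rewrite Hd.
    apply (is_lim_ext_loc (fun P => fold_right (fun s acc =>
      outage_term B (I beta) Rt (F P) s * Rpower P (m * INR dn) + acc) 0 (bool_lists B))).
    + exists 0. intros P HP.
      rewrite (outage_decomposition Omega Pr m B gam Pr_ext Pr_add Pr_iid HB I beta Rt P HP).
      now rewrite fold_right_sum_mult_r.
    + apply is_lim_list_sum. intros s Hs.
      apply outage_term_limit; [exact Hout | | | now apply bool_lists_length].
      * now apply nak_cdf_vanishes.
      * now apply nak_cdf_scaled_limit.
Qed.
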